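(* Let $n\ge 2$. Let $V_2$ be the span of all $D_{ij}(x^{\underline a})$ with $\underline a\in I^n$, $1\le i<j\le n$, $a_i\ne0$, $a_j\ne0$. Let $$\mathfrak B_2=\{D_{i_ji_{j+1}}(x^{\underline a}x_{i_j}x_{i_{j+1}})\mid \underline a\in I^n,\ \Omega(\underline a)=\{i_1<\dots<i_s\},\ 1\le j\le s-1\},$$ $$\mathfrak B_1=\{x^{\underline a}\partial_i\mid \underline a\in I^n,\ 1\le i\le n,\ a_i=0,\ a_j\neq p-1\text{ for some }j\neq i\}.$$ Then $\mathfrak B_2$ is a basis of $V_2$, and $\mathfrak B_1\cup\mathfrak B_2$ is a basis of the special algebra $S(n)$.
   Context: $\mathbb F$ is an algebraically closed field of characteristic $p>2$, $I=\{0,\dots,p-1\}$. $\mathcal A(n)$ is the truncated polynomial algebra with basis $x^{\underline a}=x_1^{a_1}\cdots x_n^{a_n}$, $\underline a\in I^n$, $x^{\underline a}x^{\underline b}=x^{\underline a+\underline b}$ ($=0$ if $\underline a+\underline b\notin I^n$). $W(n)=\mathrm{Der}\,\mathcal A(n)$ is free over $\mathcal A(n)$ on $\partial_1,\dots,\partial_n$, $\partial_i(x_j)=\delta_{ij}$. $D_{ij}(f)=\partial_j(f)\partial_i-\partial_i(f)\partial_j$. $S(n)=[\widetilde S(n),\widetilde S(n)]$ with $\widetilde S(n)=\{\sum f_i\partial_i\mid\sum\partial_i(f_i)=0\}$. For $\underline a\in I^n$, $\Omega(\underline a)=\{i\mid a_i\neq p-1\}$. *)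

From HB Require Import structures.
From mathcomp Require Import all_boot all_order all_algebra.
Set Implicit Arguments. Unset Strict Implicit. Unset Printing Implicit Defensive.
Import GRing.Theory.
Local Open Scope ring_scope.

Section Witt.
Variables (F : fieldType) (p n : nat).

Definition expo := {ffun 'I_n -> 'I_p}.

(* the truncated polynomial algebra A(n): coefficient functions on monomials *)
Definition An := {ffun expo -> F^o}.

(* W(n): the free A(n)-module on d_1..d_n; w (a, i) = coefficient of x^a d_i *)
Definition Wn := {ffun (expo * 'I_n) -> F^o}.

Definition monA (a : expo) : An := [ffun c : expo => ((c == a) : nat)%:R].

Definition xvar (i : 'I_n) : An :=
  [ffun c : expo => ([forall k, (c k : nat) == (k == i) :> nat] : nat)%:R].

(* truncated product: x^a x^b = x^(a+b) if a+b in I^n, 0 otherwise *)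
Definition mulA (f g : An) : An :=
  [ffun c : expo => \sum_(a : expo) \sum_(b : expo)
     (if [forall k, ((a k : nat) + b k)%N == c k] then f a * g b else 0)].

Definition derA (i : 'I_n) (f : An) : An :=
  [ffun c : expo => \sum_(a : expo)
     (if [forall k, (a k : nat) == ((c k : nat) + (k == i))%N] then (a i : nat)%:R * f a else 0)].

Definition compW (w : Wn) (i : 'I_n) : An := [ffun a => w (a, i)].

Definition mkW (fs : 'I_n -> An) : Wn := [ffun ai => fs ai.2 ai.1].

Definition actW (w : Wn) (g : An) : An := \sum_(i < n) mulA (compW w i) (derA i g).

Definition bracketW (u v : Wn) : Wn :=
  mkW (fun j => actW u (compW v j) - actW v (compW u j)).

Definition monW (a : expo) (i : 'I_n) : Wn := mkW (fun k => if k == i then monA a else 0).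

Definition Dij (i j : 'I_n) (f : An) : Wn :=
  mkW (fun k => (if k == i then derA j f else 0) - (if k == j then derA i f else 0)).

Definition in_Stilde (w : Wn) : Prop := \sum_(i < n) derA i (compW w i) = 0.

(* S(n) = [tilde S(n), tilde S(n)]: the linear span of brackets of elements of tilde S(n) *)
Definition in_Sn (w : Wn) : Prop :=
  exists s : seq (F * Wn * Wn),
    (forall t, t \in s -> in_Stilde t.1.2 /\ in_Stilde t.2) /\
    w = \sum_(t <- s) t.1.1 *: bracketW t.1.2 t.2.

Definition Omega (a : expo) : seq 'I_n := [seq i <- enum 'I_n | (a i : nat) != p.-1].

Definition V2 : {vspace Wn} :=
  <<[seq Dij ija.1 ija.2.1 (monA ija.2.2) |
       ija <- [seq ija : ('I_n * ('I_n * expo))%type <- [seq (i, ja) | i <- enum 'I_n, ja <- [seq (j, a) | j <- enum 'I_n, a <- enum expo]] |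
                 [&& (ija.1 < ija.2.1)%N, (ija.2.2 ija.1 : nat) != 0%N
                   & (ija.2.2 ija.2.1 : nat) != 0%N]]]>>%VS.

Definition B2 : seq Wn :=
  undup [seq Dij ik.1 ik.2 (mulA (mulA (monA a) (xvar ik.1)) (xvar ik.2)) |
           a <- enum expo, ik <- zip (Omega a) (behead (Omega a))].

Definition B1 : seq Wn :=
  undup [seq monW ai.1 ai.2 |
           ai <- [seq ai : (expo * 'I_n)%type <- [seq (a, i) | a <- enum expo, i <- enum 'I_n] |
                    ((ai.1 ai.2 : nat) == 0%N) &&
                    [exists j, (j != ai.2) && ((ai.1 j : nat) != p.-1)]]].

Definition is_basis_of (P : Wn -> Prop) (B : seq Wn) : Prop :=
  [/\ free B, (forall b, b \in B -> P b) & (forall w, P w -> w \in <<B>>%VS)].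

End Witt.

(* For divergence-free [u], [v] the Leibniz rule gives [[u, v] = sum_(k,l) D_kl (u_l v_k)], so
   [S(n)] is spanned by the [D_kl (x^b)]; conversely each [D_ij (x^b)], [i != j], is the bracket of
   two divergence-free monomial derivations, and [x^a d_i] with [a_i = 0] is a nonzero multiple of
   [D_ij (x^a x_j)].  If [b_k = 0] or [b_l = 0], [D_kl (x^b)] is a multiple of an element of [B1];
   otherwise it is [D_kl (x^a x_k x_l)], and the relation
   [(a_m + 1) D_kl = (a_l + 1) D_km + (a_k + 1) D_ml] between such elements reduces it to pairs
   [k < l] that are consecutive in [Omega a], i.e. to [B2].  Linear independence is triangularity
   with respect to the index of the first nonzero component of a derivation. *)

From Pilot Require Import Defs.
From HB Require Import structures.
From mathcomp Require Import all_boot all_order all_algebra.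
From mathcomp Require Import zify.
Import GRing.Theory.
Local Open Scope ring_scope.
Set Implicit Arguments. Unset Strict Implicit. Unset Printing Implicit Defensive.

Lemma ffunDE (T : finType) (V : nmodType) (f g : {ffun T -> V}) x :
  (f + g) x = f x + g x.
Proof. by rewrite ffunE. Qed.

Lemma ffunNE (T : finType) (V : zmodType) (f : {ffun T -> V}) x : (- f) x = - f x.
Proof. by rewrite ffunE. Qed.

Lemma ffunZE (T : finType) (K : pzRingType) (V : lmodType K) k (f : {ffun T -> V}) x :
  (k *: f) x = k *: f x.
Proof. by rewrite ffunE. Qed.

Lemma ord_ltn_neq m (i j : 'I_m) : (i < j)%N -> i != j.
Proof. by apply: contraTneq => ->; rewrite ltnn. Qed.

Lemma zip_beheadP (T : eqType) (x0 : T) (s : seq T) x y :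
  reflect (exists2 i, (i.+1 < size s)%N & (x, y) = (nth x0 s i, nth x0 s i.+1))
          ((x, y) \in zip s (behead s)).
Proof.
have sz : size (zip s (behead s)) = (size s).-1.
  by rewrite size_zip size_behead; apply/minn_idPr/leq_pred.
apply: (iffP (nthP (x0, x0))) => -[i lti e]; exists i.
- by move: lti; rewrite sz; lia.
- by rewrite -e nth_zip_cond sz ifT ?nth_behead //; move: lti; rewrite sz; lia.
- by rewrite sz; lia.
- by rewrite e nth_zip_cond sz ifT ?nth_behead //; lia.
Qed.

Lemma zip_behead_uniq (T : eqType) (s : seq T) x y y' : uniq s ->
  (x, y) \in zip s (behead s) -> (x, y') \in zip s (behead s) -> y = y'.
Proof.
move=> us /(zip_beheadP x) [i lti [ex ->]] /(zip_beheadP x) [j ltj [eij ->]].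
have : nth x s i == nth x s j by rewrite -ex -eij.
by rewrite nth_uniq //; [move/eqP-> | lia | lia].
Qed.

Lemma free_triangular (K : fieldType) (T : finType) (r : {ffun T -> K^o} -> nat)
    (s : seq {ffun T -> K^o}) :
  uniq s ->
  (forall b, b \in s -> exists2 t, b t != 0 &
     forall b', b' \in s -> b' != b -> b' t != 0 -> (r b' < r b)%N) ->
  free s.
Proof.
have [N] := ubnP (size s); elim: N s => // N IH s ltsN us tri.
case: s => [|b0 s0] in ltsN us tri *; first exact: nil_free.
set s := b0 :: s0.
have [|k /hasP[b bs /eqP rb] mink] := @ex_minnP (fun k => has (fun b => r b == k) s).
  by exists (r b0); rewrite /= eqxx.
rewrite (perm_free (perm_to_rem bs)) free_cons; apply/andP; split.
  have [t bt0 lt_rb] := tri b bs.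
  have vanish x : x \in rem b s -> x t = 0.
    rewrite mem_rem_uniq // => /andP[xb xs]; apply/eqP; apply: contraT => xt0.
    suff : (k <= r x)%N by rewrite leqNgt -rb lt_rb.
    by apply: mink; apply/hasP; exists x.
  apply: contra bt0 => /(coord_span (X := in_tuple (rem b s))) bE; apply/eqP; rewrite bE sum_ffunE.
  by apply: big1 => i _; rewrite ffunE vanish ?scaler0 // mem_nth.
apply: IH; first by rewrite size_rem //=; move: ltsN => /=; lia.
  exact: rem_uniq.
move=> b1 /mem_rem b1s; have [t b1t lt_rb1] := tri b1 b1s.
by exists t => // b' /mem_rem; apply: lt_rb1.
Qed.

Section SpecialAlgebra.
Variables (F : fieldType) (p n : nat).
Hypothesis charp : p \in [pchar F].

Local Notation expo := (expo p n).
Local Notation An := (An F p n).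
Local Notation Wn := (Wn F p n).
Local Notation mulA := (@Defs.mulA F p n).
Local Notation derA := (@Defs.derA F p n).
Local Notation monA := (@Defs.monA F p n).
Local Notation monW := (@Defs.monW F p n).
Local Notation xvar := (@Defs.xvar F p n).
Local Notation compW := (@Defs.compW F p n).
Local Notation mkW := (@Defs.mkW F p n).
Local Notation Dij := (@Defs.Dij F p n).
Local Notation bracketW := (@Defs.bracketW F p n).
Local Notation in_Stilde := (@Defs.in_Stilde F p n).
Local Notation in_Sn := (@Defs.in_Sn F p n).
Local Notation B1 := (B1 F p n).
Local Notation B2 := (B2 F p n).

Let p_gt1 : (1 < p)%N := prime_gt1 (pcharf_prime charp).

Lemma natr_lt_pchar_neq0 m : (0 < m)%N -> (m < p)%N -> m%:R != 0 :> F.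
Proof. by move=> m_gt0 ltmp; rewrite -(dvdn_pcharf charp) gtnNdvd. Qed.

(* [inc_at c i] is [c + e_i] only when [c i < p - 1]; otherwise it is [c] itself. *)
Definition inc_at (c : expo) (i : 'I_n) : expo :=
  [ffun t => if t == i then insubd (c t) (c t).+1 else c t].
Definition dec_at (c : expo) (i : 'I_n) : expo :=
  [ffun t => if t == i then insubd (c t) (c t).-1 else c t].

Lemma expoP (x y : expo) : (forall t, x t = y t :> nat) -> x = y.
Proof. by move=> eqxy; apply/ffunP => t; apply/val_inj/eqxy. Qed.

Lemma expo_eqE (x y : expo) : (x == y) = [forall t, (x t : nat) == y t].
Proof. by apply/eqP/forallP => [-> // | eqxy]; apply: expoP => t; apply/eqP. Qed.

Lemma inc_atE (c : expo) i t : ((c i).+1 < p)%N -> inc_at c i t = (c t + (t == i))%N :> nat.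
Proof.
move=> lt_ci; rewrite ffunE; case: eqP => [->|_]; last by rewrite addn0.
by rewrite val_insubd lt_ci addn1.
Qed.

Lemma dec_atE (c : expo) i t : dec_at c i t = (c t - (t == i))%N :> nat.
Proof.
rewrite ffunE; case: eqP => [->|_]; last by rewrite subn0.
by rewrite val_insubd (leq_ltn_trans (leq_pred _) (ltn_ord _)) subn1.
Qed.

Lemma inc_at2E (a : expo) i j t : i != j -> ((a i).+1 < p)%N -> ((a j).+1 < p)%N ->
  inc_at (inc_at a i) j t = (a t + (t == i) + (t == j))%N :> nat.
Proof.
move=> neq_ij lt_ai lt_aj.
have lt_aij : ((inc_at a i j).+1 < p)%N by rewrite inc_atE // eq_sym (negbTE neq_ij) addn0.
by rewrite inc_atE // inc_atE.
Qed.

Lemma inc_at_inj (a a' : expo) i : ((a i).+1 < p)%N -> ((a' i).+1 < p)%N ->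
  inc_at a i = inc_at a' i -> a = a'.
Proof.
move=> lt_ai lt_a'i e; apply: expoP => t.
by have := congr1 (fun x : expo => x t : nat) e; rewrite !inc_atE //; lia.
Qed.

Lemma expo_split2 (b : expo) i j : i != j -> b i != 0%N :> nat -> b j != 0%N :> nat ->
  exists2 a : expo, ((a i).+1 < p)%N && ((a j).+1 < p)%N & b = inc_at (inc_at a i) j.
Proof.
move=> neq_ij bi0 bj0; have lt_bi := ltn_ord (b i); have lt_bj := ltn_ord (b j).
set a := dec_at (dec_at b j) i; have neq_ji : (j == i) = false by rewrite eq_sym (negbTE neq_ij).
have lt_ai : ((a i).+1 < p)%N by rewrite !dec_atE eqxx (negbTE neq_ij); lia.
have lt_aj : ((a j).+1 < p)%N by rewrite !dec_atE eqxx neq_ji; lia.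
exists a; first by rewrite lt_ai lt_aj.
apply: expoP => t; rewrite inc_at2E // !dec_atE.
have [->|nti] := eqVneq t i; first by rewrite (negbTE neq_ij) /=; lia.
by have [->|ntj] := eqVneq t j; rewrite /=; lia.
Qed.

(** * The truncated polynomial algebra *)

Lemma monAE a c : monA a c = (c == a)%:R.
Proof. by rewrite ffunE. Qed.

Lemma An_sum_monA (f : An) : f = \sum_a f a *: monA a.
Proof.
apply/ffunP => c; rewrite sum_ffunE (big_only1 c) // => [|a /negbTE ca _].
  by rewrite !ffunE eqxx [_ *: _]mulr1.
by rewrite !ffunE eq_sym ca [_ *: _]mulr0.
Qed.

Lemma mulAC : commutative mulA.
Proof.
move=> f g; apply/ffunP => c; rewrite !ffunE exchange_big.
apply: eq_bigr => a _; apply: eq_bigr => b _.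
rewrite (eq_forallb (fun k => congr1 (eq_op ^~ _) (addnC (b k) (a k)))).
by case: ifP; rewrite // mulrC.
Qed.

Lemma mulA_is_linear f : linear (mulA f).
Proof.
move=> k g h; apply/ffunP => c; rewrite !ffunE scaler_sumr -big_split.
apply: eq_bigr => a _; rewrite scaler_sumr -big_split; apply: eq_bigr => b _.
case: ifP => _ /=; last by rewrite scaler0 addr0.
by rewrite !ffunE scalerAr mulrDr.
Qed.

HB.instance Definition _ f :=
  GRing.isLinear.Build F An An *:%R (mulA f) (mulA_is_linear f).

Lemma mulAZl k f g : mulA (k *: f) g = k *: mulA f g.
Proof. by rewrite mulAC linearZ mulAC. Qed.

Lemma mulA_suml I (r : seq I) (P : pred I) (fs : I -> An) g :
  mulA (\sum_(i <- r | P i) fs i) g = \sum_(i <- r | P i) mulA (fs i) g.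
Proof. by rewrite mulAC linear_sum; apply: eq_bigr => i _; rewrite mulAC. Qed.

Lemma mulA_sumr I (r : seq I) (P : pred I) f (gs : I -> An) :
  mulA f (\sum_(i <- r | P i) gs i) = \sum_(i <- r | P i) mulA f (gs i).
Proof. exact: linear_sum. Qed.

Lemma mulA0l f : mulA 0 f = 0.
Proof. by rewrite mulAC linear0. Qed.

Lemma mulA_monAE a b c :
  mulA (monA a) (monA b) c = ([forall k, ((a k : nat) + b k)%N == c k] : nat)%:R.
Proof.
rewrite ffunE (big_only1 a) // => [|a' /negbTE aa' _]; last first.
  by apply: big1 => b' _; case: ifP; rewrite // monAE aa' mul0r.
rewrite (big_only1 b) // => [|b' /negbTE bb' _]; last by case: ifP; rewrite // !monAE bb' mulr0.
by rewrite !monAE !eqxx mulr1; case: ifP.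
Qed.

Lemma mulA_monA (a b c : expo) : (forall k, (a k : nat) + b k = c k)%N ->
  mulA (monA a) (monA b) = monA c.
Proof.
move=> abc; apply/ffunP => x; rewrite mulA_monAE monAE expo_eqE.
by congr (nat_of_bool _)%:R; apply: eq_forallb => k; rewrite abc eq_sym.
Qed.

Lemma derA_is_linear i : linear (derA i).
Proof.
move=> k f g; apply/ffunP => c; rewrite !ffunE scaler_sumr -big_split.
apply: eq_bigr => a _; case: ifP => _ /=; last by rewrite scaler0 addr0.
by rewrite !ffunE scalerAr mulrDr.
Qed.

HB.instance Definition _ i :=
  GRing.isLinear.Build F An An *:%R (derA i) (derA_is_linear i).

Lemma derAE i f c :
  derA i f c = if ((c i).+1 < p)%N then (c i).+1%:R * f (inc_at c i) else 0.
Proof.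
rewrite ffunE; case: ifP => lt_ci; last first.
  apply: big1 => a _; case: ifP => // /forallP /(_ i) /eqP; rewrite eqxx addn1 => e.
  by have := ltn_ord (a i); rewrite e lt_ci.
rewrite (big_only1 (inc_at c i)) // => [|a ne _].
  rewrite ifT ?inc_atE ?eqxx ?addn1 //.
  by apply/forallP => k; rewrite inc_atE.
case: ifP => // /forallP eq_a; case/negP: ne; apply/eqP/expoP => t.
by rewrite inc_atE //; apply/eqP/eq_a.
Qed.

Lemma derA_monA i a : derA i (monA a) = (a i)%:R *: monA (dec_at a i).
Proof.
apply/ffunP => c; rewrite ffunE (big_only1 a) // => [|b /negbTE ba _]; last first.
  by case: ifP; rewrite // monAE ba mulr0.
rewrite [RHS]ffunE !monAE eqxx mulr1.
have [ai0|ai0] := eqVneq (a i : nat) 0%N; first by rewrite ai0 scale0r; case: ifP.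
suff -> : [forall k, (a k : nat) == (c k + (k == i))%N] = (c == dec_at a i).
  by case: eqP; rewrite ?[_ *: _]mulr1 ?[_ *: _]mulr0.
rewrite expo_eqE; apply: eq_forallb => k; rewrite dec_atE.
by case: (k =P i) => [->|_] /=; apply/eqP/eqP; lia.
Qed.

Lemma forall_dec_at (a : expo) i (g h : 'I_n -> nat) : a i != 0%N :> nat ->
  [forall k, (dec_at a i k + g k == h k)%N] = [forall k, (a k + g k == h k + (k == i))%N].
Proof.
move=> ai0; apply: eq_forallb => k; rewrite dec_atE.
by case: (k =P i) => [->|_] /=; apply/eqP/eqP; lia.
Qed.

(* Leibniz survives truncation: if [x^a x^b] is truncated away but a term on the right is not,
   then [a i + b i = p], which vanishes in [F]. *)
Lemma derA_mulA_monA i a b :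
  derA i (mulA (monA a) (monA b)) =
  mulA (derA i (monA a)) (monA b) + mulA (monA a) (derA i (monA b)).
Proof.
rewrite !derA_monA mulAZl linearZ /=; apply/ffunP => c.
rewrite derAE ffunDE !ffunZE [mulA (monA a) (monA (dec_at b i))]mulAC !mulA_monAE.
set X := [forall k, ((a k : nat) + b k)%N == (c k + (k == i))%N].
have ea : (a i)%:R * ([forall k, ((dec_at a i k : nat) + b k)%N == c k] : nat)%:R
          = (a i)%:R * (X : nat)%:R :> F.
  by have [->|ai0] := eqVneq (a i : nat) 0%N; rewrite ?mul0r // forall_dec_at.
have eb : (b i)%:R * ([forall k, ((dec_at b i k : nat) + a k)%N == c k] : nat)%:R
          = (b i)%:R * (X : nat)%:R :> F.
  have [->|bi0] := eqVneq (b i : nat) 0%N; rewrite ?mul0r // forall_dec_at //.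
  by congr (_ * (nat_of_bool _)%:R); apply: eq_forallb => k; rewrite addnC.
rewrite [_ *: _]ea [_ *: _]eb -mulrDl -natrD.
case: ifP => [lt_ci|/negbT ge_ci].
  have -> : [forall k, ((a k : nat) + b k)%N == inc_at c i k] = X.
    by apply: eq_forallb => k; rewrite inc_atE.
  case EX: X; rewrite ?mulr0 //.
  by move/forallP: EX => /(_ i)/eqP; rewrite eqxx addn1 => ->.
case EX: X; rewrite ?mulr0 //.
move/forallP: EX => /(_ i)/eqP; rewrite eqxx addn1 => ->.
suff -> : (c i).+1 = p by rewrite (pcharf0 charp) mul0r.
by have := ltn_ord (c i); lia.
Qed.

Lemma derA_mulA i f g : derA i (mulA f g) = mulA (derA i f) g + mulA f (derA i g).
Proof.
have monAl a h : derA i (mulA (monA a) h) = mulA (derA i (monA a)) h + mulA (monA a) (derA i h).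
  rewrite (An_sum_monA h) !linear_sum -(big_split _ _ _ (fun b => _)); apply: eq_bigr => b _.
  by rewrite !linearZ /= derA_mulA_monA scalerDr.
rewrite (An_sum_monA f) !(mulA_suml, linear_sum) -(big_split _ _ _ (fun b => _)).
apply: eq_bigr => a _.
by rewrite !(mulAZl, linearZ) /= monAl scalerDr.
Qed.

(** * Derivations *)

Lemma compW_mkW fs k : compW (mkW fs) k = fs k.
Proof. by apply/ffunP => c; rewrite !ffunE. Qed.

Lemma WnP (u v : Wn) : (forall k, compW u k = compW v k) -> u = v.
Proof.
move=> uv; apply/ffunP => -[c k].
by have := congr1 (fun f : An => f c) (uv k); rewrite !ffunE.
Qed.

Lemma compWD (u v : Wn) k : compW (u + v) k = compW u k + compW v k.
Proof. by apply/ffunP => c; rewrite !ffunE. Qed.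

Lemma compWN (u : Wn) k : compW (- u) k = - compW u k.
Proof. by apply/ffunP => c; rewrite !ffunE. Qed.

Lemma compWZ (u : Wn) a k : compW (a *: u) k = a *: compW u k.
Proof. by apply/ffunP => c; rewrite !ffunE. Qed.

Lemma compW_sum I (r : seq I) (P : pred I) (ws : I -> Wn) k :
  compW (\sum_(i <- r | P i) ws i) k = \sum_(i <- r | P i) compW (ws i) k.
Proof. by apply/ffunP => c; rewrite !(ffunE, sum_ffunE); apply: eq_bigr => i _; rewrite ffunE. Qed.

Lemma compW_Dij i j f m :
  compW (Dij i j f) m = (if m == i then derA j f else 0) - (if m == j then derA i f else 0).
Proof. exact: compW_mkW. Qed.

Lemma compW_monW a i k : compW (monW a i) k = if k == i then monA a else 0.
Proof. exact: compW_mkW. Qed.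

Lemma Dij_is_linear i j : linear (Dij i j).
Proof.
move=> a f g; apply: WnP => k; rewrite compWD compWZ !compW_Dij !linearP /=.
by case: (k == i); case: (k == j) => /=;
  rewrite scalerBr ?scaler0 ?subr0 ?sub0r ?addr0 ?opprD // addrACA.
Qed.

HB.instance Definition _ i j :=
  GRing.isLinear.Build F An Wn *:%R (Dij i j) (Dij_is_linear i j).


(* Leibniz turns each [D_kl (u_l v_k)] into four terms; the two divergences vanish and the
   remaining ones are the two halves of the bracket. *)
Lemma bracketW_divfree (u v : Wn) : in_Stilde u -> in_Stilde v ->
  bracketW u v = \sum_k \sum_l Dij k l (mulA (compW u l) (compW v k)).
Proof.
move=> divu divv; apply: WnP => m; rewrite compW_mkW compW_sum.
under [RHS]eq_bigr => k _ do rewrite compW_sum.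
under [RHS]eq_bigr => k _ do under eq_bigr => l _ do rewrite compW_Dij.
under [RHS]eq_bigr => k _ do rewrite sumrB.
rewrite sumrB (big_only1 m) // => [|k /negbTE km _]; last first.
  by apply: big1 => l _; rewrite eq_sym km.
have inner k : \sum_l (if m == l then derA k (mulA (compW u l) (compW v k)) else 0)
               = derA k (mulA (compW u m) (compW v k)).
  by rewrite (big_only1 m) ?eqxx // => l /negbTE lm _; rewrite eq_sym lm.
rewrite eqxx; under [X in _ = _ - X]eq_bigr => k _ do rewrite inner derA_mulA.
under [X in _ = X - _]eq_bigr => l _ do rewrite derA_mulA.
rewrite !big_split /= -mulA_suml -mulA_sumr divu divv mulA0l linear0 add0r addr0.
by congr (_ - _); apply: eq_bigr => k _; rewrite mulAC.
Qed.

Lemma Dij_monA i j (b : expo) :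
  Dij i j (monA b) = (b j)%:R *: monW (dec_at b j) i - (b i)%:R *: monW (dec_at b i) j.
Proof.
apply: WnP => k; rewrite compWD compWN !compWZ !compW_monW compW_Dij !derA_monA.
by case: (k == i); case: (k == j) => /=; rewrite ?scaler0.
Qed.

Definition Dxx (a : expo) (i j : 'I_n) : Wn := Dij i j (monA (inc_at (inc_at a i) j)).

Lemma Dxx_expand (a : expo) i j : i != j -> ((a i).+1 < p)%N -> ((a j).+1 < p)%N ->
  Dxx a i j = (a j).+1%:R *: monW (inc_at a i) i - (a i).+1%:R *: monW (inc_at a j) j.
Proof.
move=> neq_ij lt_ai lt_aj; have neq_ji : (j == i) = false by rewrite eq_sym (negbTE neq_ij).
rewrite /Dxx Dij_monA !inc_at2E // !eqxx (negbTE neq_ij) neq_ji /= !addn0 !addn1.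
by congr (_ *: monW _ _ - _ *: monW _ _); apply: expoP => t;
  rewrite dec_atE inc_at2E // inc_atE //; lia.
Qed.

Lemma Dxx_swap (a : expo) i j : i != j -> ((a i).+1 < p)%N -> ((a j).+1 < p)%N ->
  Dxx a j i = - Dxx a i j.
Proof.
move=> neq_ij lt_ai lt_aj; have neq_ji : j != i by rewrite eq_sym.
by rewrite !Dxx_expand // opprB.
Qed.

Lemma Dxx_chain (a : expo) k m l : k != m -> m != l -> k != l ->
  ((a k).+1 < p)%N -> ((a m).+1 < p)%N -> ((a l).+1 < p)%N ->
  (a m).+1%:R *: Dxx a k l = (a l).+1%:R *: Dxx a k m + (a k).+1%:R *: Dxx a m l.
Proof.
move=> km ml kl lt_ak lt_am lt_al; rewrite !Dxx_expand // !scalerBr !scalerA.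
rewrite [(a l).+1%:R * (a m).+1%:R]mulrC [(a l).+1%:R * (a k).+1%:R]mulrC.
by rewrite [(a k).+1%:R * (a m).+1%:R]mulrC addrA subrK.
Qed.

Local Notation ltI := (fun i j : 'I_n => (i < j)%N).
Local Notation adjacent a i j := ((i, j) \in zip (Omega a) (behead (Omega a))).

Let ltI_trans : transitive ltI := fun j i k => @ltn_trans j i k.

Lemma mem_Omega (a : expo) i : (i \in Omega a) = ((a i).+1 < p)%N.
Proof.
rewrite mem_filter mem_enum andbT; have := ltn_ord (a i).
by case: (a i : nat) => [|m] /=; lia.
Qed.

Lemma sorted_Omega (a : expo) : sorted ltI (Omega a).
Proof.
apply: sorted_filter => //.
by have := iota_ltn_sorted 0 n; rewrite -val_enum_ord sorted_map.
Qed.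

Lemma Omega_adjacent (a : expo) i j : adjacent a i j ->
  [/\ (i < j)%N, ((a i).+1 < p)%N & ((a j).+1 < p)%N].
Proof.
case/(zip_beheadP i) => t lt_t [ei ej]; rewrite -!mem_Omega; split.
- rewrite ei ej; apply: (sorted_ltn_nth ltI_trans i (sorted_Omega a));
    by rewrite ?inE ?ltnSn //; apply: ltnW.
- by rewrite ei mem_nth 1?ltnW.
- by rewrite ej mem_nth.
Qed.

Lemma Omega_index_lt (a : expo) k l : k \in Omega a -> l \in Omega a -> (k < l)%N ->
  (index k (Omega a) < index l (Omega a))%N.
Proof.
move=> kO lO lt_kl; case: ltngtP => // [lt_lk | eq_kl].
  have := sorted_ltn_nth ltI_trans k (sorted_Omega a) (index l (Omega a)) (index k (Omega a)).
  rewrite !inE !index_mem !nth_index // => /(_ lO kO lt_lk) lt_lk'.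
  by move: lt_kl; rewrite ltnNge (ltnW lt_lk').
by have := congr1 (nth k (Omega a)) eq_kl; rewrite !nth_index // => e; rewrite e ltnn in lt_kl.
Qed.

Lemma mulA_monA_xvar (a : expo) i : ((a i).+1 < p)%N -> mulA (monA a) (xvar i) = monA (inc_at a i).
Proof.
move=> lt_ai; pose e : expo := [ffun k => insubd (a i) (k == i : nat)].
have eE k : e k = (k == i) :> nat.
  by rewrite ffunE val_insubd; case: (k == i) => /=; rewrite ?p_gt1 ?(ltnW p_gt1).
have -> : xvar i = monA e.
  apply/ffunP => c; rewrite !ffunE expo_eqE.
  by congr (nat_of_bool _)%:R; apply: eq_forallb => k; rewrite eE.
by apply: mulA_monA => k; rewrite eE inc_atE.
Qed.

Lemma Dxx_xvar (a : expo) i j : adjacent a i j ->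
  Dij i j (mulA (mulA (monA a) (xvar i)) (xvar j)) = Dxx a i j.
Proof.
case/Omega_adjacent=> lt_ij lt_ai lt_aj.
have lt_aij : ((inc_at a i j).+1 < p)%N.
  by rewrite inc_atE // eq_sym (negbTE (ord_ltn_neq lt_ij)) addn0.
by rewrite !mulA_monA_xvar.
Qed.

Lemma Dxx_in_B2 (a : expo) i j : adjacent a i j -> Dxx a i j \in B2.
Proof.
move=> ij; rewrite mem_undup; apply/allpairsPdep; exists a, (i, j).
by rewrite mem_enum Dxx_xvar.
Qed.

Lemma B2P b : b \in B2 -> exists a i j, adjacent a i j /\ b = Dxx a i j.
Proof.
rewrite mem_undup => /allpairsPdep[a [[i j] [_ ij ->]]].
by exists a, i, j; rewrite Dxx_xvar.
Qed.

Lemma monW_in_B1 (a : expo) i j :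
  a i = 0%N :> nat -> j != i -> a j != p.-1 :> nat -> monW a i \in B1.
Proof.
move=> ai0 ji aj; rewrite mem_undup; apply/mapP; exists (a, i) => //.
rewrite mem_filter /= ai0 eqxx allpairs_f ?mem_enum //=.
by rewrite andbT; apply/existsP; exists j; rewrite ji.
Qed.

Lemma B1P b : b \in B1 -> exists (a : expo) i,
  [/\ a i = 0%N :> nat, exists2 j, j != i & a j != p.-1 :> nat & b = monW a i].
Proof.
rewrite mem_undup => /mapP[[a i]]; rewrite mem_filter /= => /andP[/andP[/eqP ai0]].
by case/existsP=> j /andP[ji aj] _ ->; exists a, i; split=> //; exists j.
Qed.

Lemma Dij_monA_inc_at (a : expo) i j : a i = 0%N :> nat -> j != i -> ((a j).+1 < p)%N ->
  Dij i j (monA (inc_at a j)) = (a j).+1%:R *: monW a i.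
Proof.
move=> ai0 ji lt_aj; have ij : (i == j) = false by rewrite eq_sym (negbTE ji).
rewrite Dij_monA !inc_atE // eqxx ij ai0 addn1 scale0r subr0; congr (_ *: monW _ _).
by apply: expoP => t; rewrite dec_atE inc_atE //; lia.
Qed.

(** * Spanning *)

Local Notation B := (undup (B1 ++ B2)).

Lemma span_B2_sub : (<<B2>> <= <<B>>)%VS.
Proof. by apply: sub_span => b b2; rewrite mem_undup mem_cat b2 orbT. Qed.

Lemma Dxx_in_span_B2 (a : expo) k l : k \in Omega a -> l \in Omega a -> (k < l)%N ->
  Dxx a k l \in <<B2>>%VS.
Proof.
set s := Omega a => kO lO lt_kl.
have lt_nth i j : (i < j)%N -> (j < size s)%N -> (nth k s i < nth k s j)%N.
  move=> lt_ij lt_js; apply: (sorted_ltn_nth ltI_trans k (sorted_Omega a)) => //.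
  by rewrite inE (ltn_trans lt_ij).
have lt_pnth i : (i < size s)%N -> ((a (nth k s i)).+1 < p)%N.
  by move=> lt_is; rewrite -mem_Omega mem_nth.
suff adj d i : (i + d.+1 < size s)%N -> Dxx a (nth k s i) (nth k s (i + d.+1)) \in <<B2>>%VS.
  have lt_kls : (index k s < index l s)%N := Omega_index_lt kO lO lt_kl.
  have := adj (index l s - (index k s).+1)%N (index k s).
  have e : (index k s + (index l s - (index k s).+1).+1)%N = index l s by lia.
  by rewrite e !nth_index //; apply; rewrite index_mem.
have adjB j : (j.+1 < size s)%N -> Dxx a (nth k s j) (nth k s j.+1) \in <<B2>>%VS.
  by move=> lt_js; apply/memv_span/Dxx_in_B2/(zip_beheadP k); exists j.
elim: d i => [|d IHd] i lt_ids; first by rewrite addn1 in lt_ids *; apply: adjB.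
set k' := nth k s i; set m' := nth k s i.+1; set l' := nth k s (i + d.+2).
have lt_km : (k' < m')%N by apply: lt_nth; lia.
have lt_ml : (m' < l')%N by apply: lt_nth; lia.
have [lt_ak lt_am lt_al] : [/\ ((a k').+1 < p)%N, ((a m').+1 < p)%N & ((a l').+1 < p)%N].
  by split; apply: lt_pnth; lia.
rewrite -[Dxx _ _ _]scale1r -(mulVf (natr_lt_pchar_neq0 (ltn0Sn _) lt_am)) -scalerA.
have lt_kl' := ltn_trans lt_km lt_ml.
rewrite (Dxx_chain (ord_ltn_neq lt_km) (ord_ltn_neq lt_ml)) ?(ord_ltn_neq lt_kl') //.
apply/memvZ/memvD; apply/memvZ; first by apply: adjB; lia.
by move: (IHd i.+1); rewrite addSnnS; apply.
Qed.

Lemma Dij_monA_in_span (b : expo) k l : Dij k l (monA b) \in <<B>>%VS.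
Proof.
have B1_term i j : j != i -> b i = 0%N :> nat -> (b j)%:R *: monW (dec_at b j) i \in <<B>>%VS.
  move=> ji bi0; have [bj0|bj0] := eqVneq (b j : nat) 0%N; first by rewrite bj0 scale0r mem0v.
  have ij : (i == j) = false by rewrite eq_sym (negbTE ji).
  apply/memvZ/memv_span; rewrite mem_undup mem_cat; apply/orP; left.
  by apply: (monW_in_B1 (j := j)); rewrite // !dec_atE ?ij ?eqxx /=; have := ltn_ord (b j); lia.
have [<-|kl] := eqVneq k l; first by rewrite Dij_monA subrr mem0v.
have [bk0|bk0] := eqVneq (b k : nat) 0%N.
  by rewrite Dij_monA bk0 scale0r subr0; apply: B1_term; rewrite // eq_sym.
have [bl0|bl0] := eqVneq (b l : nat) 0%N.
  by rewrite Dij_monA bl0 scale0r sub0r memvN; apply: B1_term.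
have [a /andP[lt_ak lt_al] ->] := expo_split2 kl bk0 bl0; apply: (subvP span_B2_sub).
case: (ltngtP k l) => [lt_kl | lt_lk | /val_inj eq_kl]; last by rewrite eq_kl eqxx in kl.
  by apply: Dxx_in_span_B2; rewrite ?mem_Omega.
by rewrite -/(Dxx _ _ _) Dxx_swap 1?eq_sym // memvN; apply: Dxx_in_span_B2; rewrite ?mem_Omega.
Qed.

Lemma in_Sn_in_span w : in_Sn w -> w \in <<B>>%VS.
Proof.
case=> s [sS ->]; rewrite big_seq; apply: memv_suml => t ts; apply: memvZ.
have [du dv] := sS t ts; rewrite bracketW_divfree //.
apply: memv_suml => k _; apply: memv_suml => l _.
rewrite (An_sum_monA (mulA _ _)) linear_sum; apply: memv_suml => b _.
by rewrite linearZ; apply/memvZ/Dij_monA_in_span.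
Qed.

(** * Membership in [S(n)] *)

Lemma in_SnZ a w : in_Sn w -> in_Sn (a *: w).
Proof.
case=> s [sS ->]; exists [seq (a * t.1.1, t.1.2, t.2) | t <- s]; split.
  by move=> t /mapP[t' t's ->]; exact: sS t' t's.
by rewrite big_map scaler_sumr; apply: eq_bigr => t _; rewrite scalerA.
Qed.

Lemma in_Sn_bracket u v : in_Stilde u -> in_Stilde v -> in_Sn (bracketW u v).
Proof.
move=> du dv; exists [:: (1, u, v)]; split; last by rewrite big_seq1 scale1r.
by move=> t; rewrite inE => /eqP->.
Qed.

Lemma in_Stilde_monW (c : expo) q : c q = 0%N :> nat -> in_Stilde (monW c q).
Proof.
move=> cq0; rewrite /in_Stilde (big_only1 q) // => [|i /negbTE iq _].
  by rewrite compW_monW eqxx derA_monA cq0 scale0r.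
by rewrite compW_monW iq linear0.
Qed.

(* [D_ij (x^b) = [x^b' d_j, x^b'' d_i]] where [b'] and [b''] split [b] at the coordinate [j]. *)
Lemma Dij_monA_in_Sn (b : expo) i j : i != j -> in_Sn (Dij i j (monA b)).
Proof.
move=> ij; pose z : 'I_p := Ordinal (ltnW p_gt1).
pose b' : expo := [ffun t => if t == j then z else b t].
pose b'' : expo := [ffun t => if t == j then b t else z].
have du : in_Stilde (monW b' j) by apply: in_Stilde_monW; rewrite ffunE eqxx.
have dv : in_Stilde (monW b'' i) by apply: in_Stilde_monW; rewrite ffunE (negbTE ij).
suff -> : Dij i j (monA b) = bracketW (monW b' j) (monW b'' i) by exact: in_Sn_bracket.
rewrite bracketW_divfree // (big_only1 i) // => [|k /negbTE ki _]; last first.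
  by apply: big1 => l _; rewrite [compW _ k]compW_monW ki !linear0.
rewrite (big_only1 j) // => [|l /negbTE lj _]; last by rewrite compW_monW lj mulA0l linear0.
rewrite !compW_monW !eqxx (@mulA_monA _ _ b) // => t.
by rewrite !ffunE; case: (t == j); rewrite ?addn0.
Qed.

Lemma B_in_Sn b : b \in B -> in_Sn b.
Proof.
rewrite mem_undup mem_cat => /orP[/B1P[a [i [ai0 [j ji aj] ->]]] | /B2P[a [i [j [ij ->]]]]].
  have lt_aj : ((a j).+1 < p)%N by have := ltn_ord (a j); lia.
  rewrite -[monW a i]scale1r -(mulVf (natr_lt_pchar_neq0 (ltn0Sn _) lt_aj)) -scalerA.
  by rewrite -Dij_monA_inc_at //; apply/in_SnZ/Dij_monA_in_Sn; rewrite eq_sym.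
by have [lt_ij _ _] := Omega_adjacent ij; apply/Dij_monA_in_Sn/ord_ltn_neq.
Qed.

(** * Linear independence *)

Definition lead_index (w : Wn) : nat := find (fun k : 'I_n => compW w k != 0) (enum 'I_n).

Lemma lead_indexE (w : Wn) i : compW w i != 0 ->
  (forall k : 'I_n, (k < i)%N -> compW w k = 0) -> lead_index w = i.
Proof.
move=> wi0 w0; rewrite /lead_index; set j := find _ _.
have has_w : has (fun k => compW w k != 0) (enum 'I_n) by apply/hasP; exists i; rewrite ?mem_enum.
have lt_jn : (j < n)%N by rewrite -[n]size_enum_ord -has_find.
have nthE (m : nat) (lt_mn : (m < n)%N) : nth i (enum 'I_n) m = Ordinal lt_mn.
  by apply: val_inj; rewrite /= nth_enum_ord.
case: (ltngtP j i) => // [lt_ji | lt_ij].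
  by move: (nth_find i has_w); rewrite -/j nthE w0 ?eqxx.
by move: (before_find i lt_ij); rewrite nth_ord_enum wi0.
Qed.

Lemma monA_neq0 (a : expo) : monA a != 0.
Proof. by apply/eqP => /ffunP/(_ a); rewrite !ffunE eqxx; apply/eqP/oner_neq0. Qed.

Lemma monWE (a : expo) i c k : monW a i (c, k) = ((c == a) && (k == i))%:R.
Proof. by rewrite !ffunE /=; case: (k == i); rewrite ?andbT ?andbF ?ffunE. Qed.

Lemma monW_supp (a : expo) i t : monW a i t != 0 -> t = (a, i).
Proof.
case: t => c k; rewrite monWE.
by case: (c =P a) => [->|_]; case: (k =P i) => [->|_] //=; rewrite eqxx.
Qed.

Section DxxCoordinates.
Variables (a : expo) (i j : 'I_n).
Hypotheses (neq_ij : i != j) (lt_ai : ((a i).+1 < p)%N) (lt_aj : ((a j).+1 < p)%N).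

Lemma DxxE c k : Dxx a i j (c, k) =
  (a j).+1%:R * ((c == inc_at a i) && (k == i))%:R
  - (a i).+1%:R * ((c == inc_at a j) && (k == j))%:R.
Proof. by rewrite Dxx_expand // ffunDE ffunNE !ffunZE !monWE. Qed.

Lemma Dxx_pivot : Dxx a i j (inc_at a i, i) = (a j).+1%:R.
Proof. by rewrite DxxE !eqxx (negbTE neq_ij) andbF mulr0 subr0 mulr1. Qed.

Lemma Dxx_supp t : Dxx a i j t != 0 -> t = (inc_at a i, i) \/ t = (inc_at a j, j).
Proof.
case: t => c k; rewrite DxxE.
case: (k =P i) => [->|/eqP ki]; first by rewrite (negbTE neq_ij) andbF mulr0 subr0;
  case: (c =P inc_at a i) => [->|_]; [left | rewrite mulr0 eqxx].
rewrite andbF mulr0 sub0r oppr_eq0; case: (k =P j) => [->|_]; last by rewrite andbF mulr0 eqxx.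
by case: (c =P inc_at a j) => [->|_]; [right | rewrite mulr0 eqxx].
Qed.

Lemma lead_index_Dxx : (i < j)%N -> lead_index (Dxx a i j) = i.
Proof.
move=> lt_ij; rewrite Dxx_expand //; apply: lead_indexE => [|k lt_ki];
  rewrite compWD compWN !compWZ !compW_monW.
  rewrite eqxx (negbTE neq_ij) scaler0 subr0 scaler_eq0 negb_or monA_neq0 andbT.
  exact: natr_lt_pchar_neq0.
rewrite (negbTE (ord_ltn_neq lt_ki)) (negbTE (ord_ltn_neq (ltn_trans lt_ki lt_ij))) /=.
by rewrite !scaler0 subr0.
Qed.

End DxxCoordinates.

Lemma B_cases b : b \in B ->
  (exists (a : expo) i, a i = 0%N :> nat /\ b = monW a i) \/
  (exists a i j, adjacent a i j /\ b = Dxx a i j).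
Proof.
rewrite mem_undup mem_cat => /orP[/B1P[a [i [ai0 _ ->]]] | /B2P[a [i [j [ij ->]]]]].
  by left; exists a, i.
by right; exists a, i, j.
Qed.

(* The pivot of [x^a d_i] is its only nonzero coordinate [(a, i)]; that of [D_ij (x^a x_i x_j)]
   is [(a + e_i, i)], where among the other elements of [B] only some [D_ki (x^a x_k x_i)] with
   [k < i] are nonzero, because [j] is the successor of [i] in [Omega a]. *)
Lemma B_triangular b : b \in B -> exists2 t, b t != 0 &
  forall b', b' \in B -> b' != b -> b' t != 0 -> (lead_index b' < lead_index b)%N.
Proof.
case/B_cases => [[a [i [ai0 ->]]] | [a [i [j [ij ->]]]]].
  exists (a, i); first by rewrite monWE !eqxx oner_neq0.
  move=> b' /B_cases[[a' [i' [_ ->]]] | [a' [k [l [kl ->]]]]] nb.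
    by move/monW_supp => -[ea ei]; rewrite ea ei eqxx in nb.
  have [lt_kl lt_ak lt_al] := Omega_adjacent kl.
  by case/(Dxx_supp (ord_ltn_neq lt_kl) lt_ak lt_al) => -[ea ei];
    move: ai0; rewrite ea ei inc_atE // eqxx addn1.
have [lt_ij lt_ai lt_aj] := Omega_adjacent ij; have neq_ij := ord_ltn_neq lt_ij.
exists (inc_at a i, i); first by rewrite Dxx_pivot // natr_lt_pchar_neq0.
rewrite lead_index_Dxx //.
move=> b' /B_cases[[a' [i' [a'i0 ->]]] | [a' [k [l [kl ->]]]]] nb.
  by move/monW_supp => -[ea ei]; move: a'i0; rewrite -ea -ei inc_atE // eqxx addn1.
have [lt_kl lt_ak lt_al] := Omega_adjacent kl; rewrite lead_index_Dxx ?ord_ltn_neq //.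
case/(Dxx_supp (ord_ltn_neq lt_kl) lt_ak lt_al) => -[ea ek]; last by rewrite ek.
subst k; have ea' := inc_at_inj lt_ai lt_ak ea; subst a'.
by rewrite (zip_behead_uniq (filter_uniq _ (enum_uniq _)) kl ij) eqxx in nb.
Qed.

Lemma free_B : free B.
Proof. exact: free_triangular (undup_uniq _) B_triangular. Qed.

Lemma free_B2 : free B2.
Proof.
have B2B b : b \in B2 -> b \in B by rewrite mem_undup mem_cat orbC => ->.
apply: (free_triangular (r := lead_index)) (undup_uniq _) _ => b /B2B /B_triangular[t bt lt_b].
by exists t => // b' /B2B; apply: lt_b.
Qed.

Lemma V2_spanE : V2 F p n = <<B2>>%VS.
Proof.
apply/eqP; rewrite eqEsubv; apply/andP; split; apply/span_subvP.
  move=> w /mapP[[i [j b]]]; rewrite mem_filter /= => /andP[/and3P[lt_ij bi0 bj0] _] ->.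
  have [a /andP[lt_ai lt_aj] ->] := expo_split2 (ord_ltn_neq lt_ij) bi0 bj0.
  by apply: Dxx_in_span_B2; rewrite ?mem_Omega.
move=> w /B2P[a [i [j [ij ->]]]]; have [lt_ij lt_ai lt_aj] := Omega_adjacent ij.
apply/memv_span/mapP; exists (i, (j, inc_at (inc_at a i) j)) => //.
rewrite mem_filter /= lt_ij !inc_at2E ?ord_ltn_neq // !eqxx !addn1 /=.
by rewrite allpairs_f ?mem_enum // allpairs_f ?mem_enum.
Qed.

End SpecialAlgebra.

Unset Implicit Arguments.

Theorem corollary4p4 (F : closedFieldType) (p n : nat) :
  prime p -> (2 < p)%N -> p \in [pchar F] -> (2 <= n)%N ->
  basis_of (V2 F p n) (B2 F p n) /\
  is_basis_of (in_Sn (F := F) (p := p) (n := n)) (undup (B1 F p n ++ B2 F p n)).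
Proof.
move=> _ _ charp _; split; first by rewrite /basis_of V2_spanE ?eqxx ?free_B2.
by split; [apply: free_B | apply: B_in_Sn | apply: in_Sn_in_span].
Qed.
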